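(* Let $\alpha>0$ and let $D_\alpha(t)=(1+t^{-\alpha})^{-1}$ for $t>0$, $D_\alpha(0)=0$. A distribution function $F\in\Delta_+$ is in the Boolean max-domain of attraction of $D_\alpha$ if and only if $1-F$ is regularly varying of index $-\alpha$.
   Context: $\Delta_+$ is the set of functions $F:[0,\infty)\to[0,1]$ that are nondecreasing, right continuous and satisfy $\lim_{t\to\infty}F(t)=1$. Define $\sqcap$ on $[0,1]$ by $(x\sqcap y)^{-1}-1=(x^{-1}-1)+(y^{-1}-1)$ (conventions $0^{-1}=+\infty$, $(+\infty)^{-1}=0$), and the Boolean max-convolution of $F,G\in\Delta_+$ by $(F\boxed{\vee}G)(t)=F(t)\sqcap G(t)$; $G^{\boxed{\vee}n}$ denotes the $n$-fold Boolean max-convolution of $G$ with itself. $G\in\Delta_+$ is in the Boolean max-domain of attraction of $H\in\Delta_+$ if there exist $a_n>0$ ($n\in\mathbb{N}$) with $G^{\boxed{\vee}n}(a_nt)\to H(t)$ as $n\to\infty$ for all $t\ge0$. A function $h$ on $[0,\infty)$ is regularly varying of index $-\alpha$ if $\lim_{t\to+\infty}h(tx)/h(t)=x^{-\alpha}$ for all $x>0$. *)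

From Stdlib Require Import Reals Lra.
From Coquelicot Require Import Coquelicot.
Open Scope R_scope.

(* Delta_+ : F : [0,oo) -> [0,1] nondecreasing, right continuous, F(t) -> 1.
   Functions are total on R; only their values on [0,oo) matter. *)
Definition in_Delta_plus (F : R -> R) : Prop :=
  (forall t, 0 <= t -> 0 <= F t <= 1) /\
  (forall s t, 0 <= s -> s <= t -> F s <= F t) /\
  (forall t, 0 <= t -> filterlim F (at_right t) (locally (F t))) /\
  is_lim F p_infty 1.

(* x ⊓ y defined by (x ⊓ y)^{-1} - 1 = (x^{-1}-1) + (y^{-1}-1),
   with 0^{-1} = +oo and (+oo)^{-1} = 0.  Unfolded: if x = 0 or y = 0 the
   right-hand side is +oo, so x ⊓ y = 0; otherwise
   x ⊓ y = (x^{-1} + y^{-1} - 1)^{-1}. *)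
Definition bmeet (x y : R) : R :=
  if Req_EM_T x 0 then 0
  else if Req_EM_T y 0 then 0
  else / (/ x + / y - 1).

Definition bmconv (F G : R -> R) : R -> R := fun t => bmeet (F t) (G t).

(* n-fold Boolean max-convolution of G with itself (n = 0 gives the unit
   delta_0, i.e. the constant 1, which is neutral for ⊓; only large n matter). *)
Fixpoint bmpow (G : R -> R) (n : nat) : R -> R :=
  match n with
  | O => fun _ => 1
  | S O => G
  | S m => bmconv G (bmpow G m)
  end.

Definition in_BMDA (G H : R -> R) : Prop :=
  exists a : nat -> R, (forall n, 0 < a n) /\
    forall t, 0 <= t -> is_lim_seq (fun n => bmpow G n (a n * t)) (H t).

Definition regularly_varying (h : R -> R) (alpha : R) : Prop :=
  forall x, 0 < x -> is_lim (fun t => h (t * x) / h t) p_infty (Rpower x (- alpha)).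

Definition D_alpha (alpha : R) (t : R) : R :=
  if Rlt_dec 0 t then / (1 + Rpower t (- alpha)) else 0.

(* The n-fold Boolean max-convolution has the closed form
   F^n(t) = F(t) / (F(t) + n (1 - F(t))), so F^n(a_n t) -> (1 + t^-alpha)^-1
   for t > 0 exactly when n (1 - F(a_n t)) -> t^-alpha, while at t = 0 the
   limit 0 only requires F(0) < 1.  What remains is the classical
   characterisation of the regularly varying tail u = 1 - F by normalizing
   sequences.  If u is regularly varying, let a_n - 1 be the least integer k
   with n u(k) <= 1; then u(a_n) / u(a_n - 2) -> 1 squeezes n u(a_n) to 1, and
   n u(a_n t) = n u(a_n) * u(a_n t) / u(a_n).  Conversely, for large s let
   m = floor (1 / u(s)), so that m u(s) -> 1; monotonicity of u traps s
   between a_m y and a_m y' whenever y^-alpha > 1 > y'^-alpha, which squeezes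
   m u(s x) to x^-alpha, and u(s x) / u(s) = m u(s x) / (m u(s)). *)

From Stdlib Require Import Reals Lra Lia ZArith ClassicalEpsilon ConstructiveEpsilon.
From Coquelicot Require Import Coquelicot.
Open Scope R_scope.

Section FilterBounds.

Context {T : Type} {F : (T -> Prop) -> Prop} {FF : Filter F}.

Lemma filterlim_R_bounds (f : T -> R) (l eps : R) :
  filterlim f F (locally l) -> 0 < eps -> F (fun x => l - eps < f x < l + eps).
Proof.
  intros Hf Heps.
  apply (filter_imp (fun x => Rabs (f x - l) < eps)).
  - intros x Hx. apply Rabs_def2 in Hx. lra.
  - exact (proj1 (filterlim_locally f l) Hf (mkposreal _ Heps)).
Qed.

Lemma filterlim_lt (f g : T -> R) (a b : R) :
  filterlim f F (locally a) -> filterlim g F (locally b) -> a < b ->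
  F (fun x => f x < g x).
Proof.
  intros Hf Hg Hab.
  assert (Heps : 0 < (b - a) / 2) by lra.
  generalize (filter_and _ _ (filterlim_R_bounds f a _ Hf Heps)
                             (filterlim_R_bounds g b _ Hg Heps)).
  apply filter_imp. intros x Hx. lra.
Qed.

Lemma filterlim_locally_of_bounds (f : T -> R) (l : R) :
  (forall eps, 0 < eps -> F (fun x => l - eps < f x)) ->
  (forall eps, 0 < eps -> F (fun x => f x < l + eps)) ->
  filterlim f F (locally l).
Proof.
  intros Hlo Hhi. apply filterlim_locally. intros [eps Heps].
  generalize (filter_and _ _ (Hlo eps Heps) (Hhi eps Heps)).
  apply filter_imp. intros x Hx. change (Rabs (f x - l) < eps).
  apply Rabs_def1; lra.
Qed.

End FilterBounds.

Lemma eventually_gt_p_infty (M : R) : Rbar_locally p_infty (fun s => M < s).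
Proof. exists M. auto. Qed.

Lemma is_lim_seq_eventually_gt (b : nat -> R) (M : R) :
  is_lim_seq b p_infty -> eventually (fun n => M < b n).
Proof. intros Hb. exact (Hb _ (eventually_gt_p_infty M)). Qed.

Lemma eventually_INR_gt (M : R) : eventually (fun n => M < INR n).
Proof. exact (is_lim_seq_eventually_gt _ M is_lim_seq_INR). Qed.

Lemma eventually_ge1 : eventually (fun n => (1 <= n)%nat).
Proof. exists 1%nat. auto. Qed.

Lemma is_lim_seq_inv_p_infty (v : nat -> R) :
  is_lim_seq v p_infty -> is_lim_seq (fun n => / v n) 0.
Proof. intros Hv. exact (is_lim_seq_inv v p_infty Hv ltac:(discriminate)). Qed.

Lemma is_lim_seq_div_p_infty (b : nat -> R) (k : R) :
  0 < k -> is_lim_seq b p_infty -> is_lim_seq (fun n => b n / k) p_infty.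
Proof.
  intros Hk Hb P [M HM]. apply (Hb (fun x => P (x / k))).
  exists (M * k). intros x Hx. apply HM. apply Rlt_div_r; lra.
Qed.

Lemma Rmult_lt_reg_INR (n : nat) (x y : R) : INR n * x < INR n * y -> x < y.
Proof.
  intros H. destruct (Rlt_or_le x y) as [|Hle]; [assumption|].
  pose proof (Rmult_le_compat_l _ _ _ (pos_INR n) Hle). lra.
Qed.

Lemma Int_part_to_nat_bounds (x : R) :
  0 <= x -> INR (Z.to_nat (Int_part x)) <= x < INR (Z.to_nat (Int_part x)) + 1.
Proof.
  intros Hx. destruct (base_Int_part x) as [Hle Hgt].
  assert (Hz : (-1 < Int_part x)%Z) by (apply lt_IZR; lra).
  rewrite INR_IZR_INZ, Z2Nat.id by lia. lra.
Qed.

Lemma Rpower_pos (x y : R) : 0 < Rpower x y.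
Proof. apply exp_pos. Qed.

Lemma Rpower_1_base (y : R) : Rpower 1 y = 1.
Proof. unfold Rpower. rewrite ln_1, Rmult_0_r. apply exp_0. Qed.

Section PowerRoot.

Variable alpha : R.
Hypothesis alpha_gt0 : 0 < alpha.

Lemma Rpower_root (v : R) : 0 < v -> Rpower (Rpower v (- / alpha)) (- alpha) = v.
Proof.
  intros Hv. rewrite Rpower_mult.
  replace (- / alpha * - alpha) with 1 by (field; lra).
  apply Rpower_1, Hv.
Qed.

Lemma Rpower_root_gt1 (v : R) : 0 < v < 1 -> 1 < Rpower v (- / alpha).
Proof.
  intros Hv. unfold Rpower. rewrite <- exp_0. apply exp_increasing.
  assert (ln v < 0) by (rewrite <- ln_1; apply ln_increasing; lra).
  assert (0 < / alpha) by (apply Rinv_0_lt_compat, alpha_gt0).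
  nra.
Qed.

Lemma Rpower_scaled_root (v x : R) : 0 < v -> 0 < x ->
  Rpower (Rpower v (- / alpha) * x) (- alpha) = v * Rpower x (- alpha).
Proof.
  intros Hv Hx. rewrite <- Rpower_mult_distr by (auto using Rpower_pos).
  rewrite Rpower_root; auto.
Qed.

End PowerRoot.

Definition bmeet_pow (x : R) (n : nat) : R := x / (x + INR n * (1 - x)).

Lemma bmeet_pow_denom_ge1 (x : R) (n : nat) :
  x <= 1 -> (1 <= n)%nat -> 1 <= x + INR n * (1 - x).
Proof. intros Hx Hn. apply le_INR in Hn. simpl in Hn. nra. Qed.

Lemma bmpow_closed_form (F : R -> R) (n : nat) (t : R) :
  0 <= F t <= 1 -> (1 <= n)%nat -> bmpow F n t = bmeet_pow (F t) n.
Proof.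
  intros HF Hn. unfold bmeet_pow. induction n as [|n IH]; [lia|].
  destruct n as [|n].
  - simpl. field_simplify; [reflexivity|lra].
  - change (bmpow F (S (S n)) t) with (bmeet (F t) (bmpow F (S n) t)).
    rewrite IH by lia. unfold bmeet.
    pose proof (bmeet_pow_denom_ge1 (F t) (S n) ltac:(lra) ltac:(lia)) as HD.
    destruct (Req_EM_T (F t) 0) as [H0|H0].
    + rewrite H0. unfold Rdiv. ring.
    + assert (HP : 0 < F t / (F t + INR (S n) * (1 - F t))) by (apply Rdiv_lt_0_compat; lra).
      destruct (Req_EM_T (F t / (F t + INR (S n) * (1 - F t))) 0) as [E|_]; [lra|].
      rewrite S_INR with (n := S n). field. rewrite S_INR in HD |- *. split; [|lra]. nra.
Qed.

(* With y = n (1 - x) and z = x / (x + y) one has x = 1 - y / n and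
   y = (1 - z) / (z + (1 - z) / n), so each of y, z is a continuous
   function of the other and of 1 / n. *)
Lemma bmeet_pow_cvg_iff (x : nat -> R) (L : R) :
  (forall n, x n <= 1) -> 0 <= L ->
  is_lim_seq (fun n => bmeet_pow (x n) n) (/ (1 + L)) <->
  is_lim_seq (fun n => INR n * (1 - x n)) L.
Proof.
  intros Hx HL.
  pose proof (is_lim_seq_inv_p_infty _ is_lim_seq_INR) as Hinv.
  assert (Hpos : eventually (fun n => 0 < INR n /\ 1 <= x n + INR n * (1 - x n))).
  { generalize eventually_ge1. apply filter_imp. intros n Hn. split.
    - apply lt_0_INR. lia.
    - apply bmeet_pow_denom_ge1; auto. }
  split; intros Hcvg.
  - apply is_lim_seq_ext_loc with
      (fun n => (1 - bmeet_pow (x n) n) / (bmeet_pow (x n) n + (1 - bmeet_pow (x n) n) * / INR n)).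
    + generalize Hpos. apply filter_imp. intros n [Hn HD].
      unfold bmeet_pow. field. split; [|lra]. nra.
    + replace L with ((1 - / (1 + L)) / (/ (1 + L) + (1 - / (1 + L)) * 0)) by (field; lra).
      apply is_lim_seq_div'; [| |rewrite Rmult_0_r, Rplus_0_r; apply Rinv_neq_0_compat; lra].
      * apply is_lim_seq_minus'; [apply is_lim_seq_const|exact Hcvg].
      * apply is_lim_seq_plus'; [exact Hcvg|].
        apply is_lim_seq_mult'; [|exact Hinv].
        apply is_lim_seq_minus'; [apply is_lim_seq_const|exact Hcvg].
  - apply is_lim_seq_ext_loc with
      (fun n => (1 - INR n * (1 - x n) * / INR n) /
                (1 - INR n * (1 - x n) * / INR n + INR n * (1 - x n))).
    + generalize Hpos. apply filter_imp. intros n [Hn HD].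
      unfold bmeet_pow. field. lra.
    + replace (/ (1 + L)) with ((1 - L * 0) / (1 - L * 0 + L)) by (field; lra).
      assert (Hxn : is_lim_seq (fun n => 1 - INR n * (1 - x n) * / INR n) (1 - L * 0)).
      { apply is_lim_seq_minus'; [apply is_lim_seq_const|].
        apply is_lim_seq_mult'; [exact Hcvg|exact Hinv]. }
      apply is_lim_seq_div'; [exact Hxn| |lra].
      apply is_lim_seq_plus'; [exact Hxn|exact Hcvg].
Qed.

Lemma bmeet_pow_cvg0 (x : R) : x < 1 -> is_lim_seq (bmeet_pow x) 0.
Proof.
  intros Hx. replace 0 with (x * 0) by ring.
  apply is_lim_seq_mult'; [apply is_lim_seq_const|].
  apply is_lim_seq_inv_p_infty, is_lim_seq_spec. intros M.
  generalize (eventually_INR_gt ((M - x) / (1 - x))). apply filter_imp. intros n Hn.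
  apply Rlt_div_l in Hn; lra.
Qed.

Definition is_normalizing (u : R -> R) (alpha : R) (a : nat -> R) : Prop :=
  (forall n, 0 < a n) /\
  forall t, 0 < t -> is_lim_seq (fun n => INR n * u (a n * t)) (Rpower t (- alpha)).

Section Tail.

Variable u : R -> R.
Hypothesis u_ge0 : forall s, 0 <= s -> 0 <= u s.
Hypothesis u_noninc : forall s t, 0 <= s -> s <= t -> u t <= u s.
Hypothesis u_cvg0 : is_lim u p_infty 0.

Lemma tail_lt_inv (s t : R) : 0 <= s -> u s < u t -> t < s.
Proof.
  intros Hs Hst. destruct (Rlt_or_le t s) as [H|H]; [exact H|].
  pose proof (u_noninc s t Hs H). lra.
Qed.

Definition tail_level (s : R) : nat := Z.to_nat (Int_part (/ u s)).

Variable alpha : R.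
Hypothesis alpha_gt0 : 0 < alpha.

Section Normalizing.

Variable a : nat -> R.
Hypothesis a_normalizing : is_normalizing u alpha a.

Lemma normalizing_tail_pos (s : R) : 0 <= s -> 0 < u s.
Proof.
  intros Hs. destruct a_normalizing as [a_pos a_cvg].
  destruct (Rle_lt_or_eq_dec _ _ (u_ge0 s Hs)) as [|Hs0]; [assumption|exfalso].
  assert (Hcvg1 : is_lim_seq (fun n => INR n * u (a n)) 1).
  { rewrite <- (Rpower_1_base (- alpha)).
    apply is_lim_seq_ext with (fun n => INR n * u (a n * 1)); [|apply a_cvg; lra].
    intros n. rewrite Rmult_1_r. reflexivity. }
  destruct (filterlim_lt _ _ _ _ (filterlim_const 0) Hcvg1 Rlt_0_1) as [N0 HN0].
  specialize (HN0 N0 (Nat.le_refl _)).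
  set (c := a N0) in *. pose proof (a_pos N0) as Hc. fold c in Hc.
  assert (Huc : 0 < u c) by (pose proof (pos_INR N0); nra).
  (* u vanishes on [s, oo), which forces a n < c eventually;
     then n u(a n) >= n u(c) -> oo contradicts n u(a n) -> 1 *)
  assert (Hsmall : eventually (fun n => a n < c)).
  { assert (HT : 0 < (s + 1) / c) by (apply Rdiv_lt_0_compat; lra).
    generalize (filterlim_lt _ _ _ _ (filterlim_const 0) (a_cvg _ HT) (Rpower_pos _ _)).
    apply filter_imp. intros n Hn. pose proof (a_pos n).
    assert (Hlt : a n * ((s + 1) / c) < s).
    { apply tail_lt_inv; [lra|]. rewrite <- Hs0. apply (Rmult_lt_reg_INR n). lra. }
    replace (a n * ((s + 1) / c)) with (a n * (s + 1) / c) in Hlt by (field; lra).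
    apply Rlt_div_l in Hlt; nra. }
  pose proof (filterlim_lt _ _ _ _ Hcvg1 (filterlim_const 2) ltac:(lra)) as Hbounded.
  destruct (filter_and _ _ (filter_and _ _ Hsmall Hbounded) (eventually_INR_gt (2 / u c)))
    as [N HN].
  destruct (HN N (Nat.le_refl _)) as [[Han H2] Hn].
  pose proof (u_noninc _ _ (Rlt_le _ _ (a_pos N)) (Rlt_le _ _ Han)).
  apply Rlt_div_l in Hn; [|exact Huc]. pose proof (pos_INR N). nra.
Qed.

Lemma tail_level_bounds (s : R) : 0 <= s ->
  INR (tail_level s) * u s <= 1 < (INR (tail_level s) + 1) * u s.
Proof.
  intros Hs. pose proof (normalizing_tail_pos s Hs) as Hu.
  destruct (Int_part_to_nat_bounds (/ u s)) as [Hlo Hhi].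
  { apply Rlt_le, Rinv_0_lt_compat, Hu. }
  unfold tail_level. split.
  - apply Rmult_le_compat_r with (r := u s) in Hlo; [|lra].
    rewrite Rinv_l in Hlo; lra.
  - apply Rmult_lt_compat_r with (r := u s) in Hhi; [|lra].
    rewrite Rinv_l in Hhi; lra.
Qed.

Lemma tail_level_cvg : is_lim (fun s => INR (tail_level s) * u s) p_infty 1.
Proof.
  apply filterlim_locally_of_bounds; intros eps Heps.
  - generalize (filter_and _ _ (eventually_gt_p_infty 0)
      (filterlim_lt _ _ _ _ u_cvg0 (filterlim_const eps) Heps)).
    apply filter_imp. intros s [Hs Hus].
    pose proof (tail_level_bounds s ltac:(lra)). lra.
  - generalize (eventually_gt_p_infty 0). apply filter_imp. intros s Hs.
    pose proof (tail_level_bounds s ltac:(lra)). lra.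
Qed.

Lemma tail_level_inf : filterlim tail_level (Rbar_locally p_infty) eventually.
Proof.
  intros P [N HN]. unfold filtermap.
  pose proof (pos_INR N) as HN0.
  assert (HN1 : 0 < / (INR N + 1)) by (apply Rinv_0_lt_compat; lra).
  generalize (filter_and _ _ (eventually_gt_p_infty 0)
    (filterlim_lt _ _ _ _ u_cvg0 (filterlim_const _) HN1)).
  apply filter_imp. intros s [Hs Hus]. apply HN.
  pose proof (tail_level_bounds s ltac:(lra)) as [_ Hhi].
  pose proof (normalizing_tail_pos s ltac:(lra)) as Hu.
  apply Rmult_lt_compat_r with (r := INR N + 1) in Hus; [|lra].
  rewrite Rinv_l in Hus by lra.
  apply Nat.lt_le_incl, INR_lt. nra.
Qed.

Lemma normalizing_level_cvg (y : R) : 0 < y ->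
  is_lim (fun s => INR (tail_level s) * u (a (tail_level s) * y)) p_infty (Rpower y (- alpha)).
Proof.
  intros Hy.
  exact (filterlim_comp _ _ _ tail_level (fun n => INR n * u (a n * y)) _ _ _
           tail_level_inf (proj2 a_normalizing y Hy)).
Qed.

Lemma normalizing_level_scaled_le (x y : R) : 0 < x -> 0 < y -> 1 < Rpower y (- alpha) ->
  Rbar_locally p_infty (fun s =>
    INR (tail_level s) * u (s * x) <= INR (tail_level s) * u (a (tail_level s) * (y * x))).
Proof.
  intros Hx Hy Hv.
  generalize (filter_and _ _ (eventually_gt_p_infty 0)
    (filterlim_lt _ _ _ _ tail_level_cvg (normalizing_level_cvg y Hy) Hv)).
  apply filter_imp. intros s [Hs Hlt]. set (m := tail_level s) in *.
  pose proof (proj1 a_normalizing m).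
  assert (Hys : a m * y < s) by (apply tail_lt_inv; [lra|exact (Rmult_lt_reg_INR _ _ _ Hlt)]).
  apply Rmult_le_compat_l; [apply pos_INR|]. apply u_noninc.
  - apply Rlt_le, Rmult_lt_0_compat; [assumption|nra].
  - rewrite <- Rmult_assoc. apply Rmult_le_compat_r; lra.
Qed.

Lemma normalizing_level_scaled_ge (x y : R) : 0 < x -> 0 < y -> Rpower y (- alpha) < 1 ->
  Rbar_locally p_infty (fun s =>
    INR (tail_level s) * u (a (tail_level s) * (y * x)) <= INR (tail_level s) * u (s * x)).
Proof.
  intros Hx Hy Hv.
  generalize (filter_and _ _ (eventually_gt_p_infty 0)
    (filterlim_lt _ _ _ _ (normalizing_level_cvg y Hy) tail_level_cvg Hv)).
  apply filter_imp. intros s [Hs Hlt]. set (m := tail_level s) in *.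
  pose proof (proj1 a_normalizing m).
  assert (Hsy : s < a m * y)
    by (apply tail_lt_inv; [nra|exact (Rmult_lt_reg_INR _ _ _ Hlt)]).
  apply Rmult_le_compat_l; [apply pos_INR|]. apply u_noninc; [nra|].
  rewrite <- Rmult_assoc. apply Rmult_le_compat_r; lra.
Qed.

Lemma normalizing_level_scaled (x : R) : 0 < x ->
  is_lim (fun s => INR (tail_level s) * u (s * x)) p_infty (Rpower x (- alpha)).
Proof.
  intros Hx. pose proof (Rpower_pos x (- alpha)) as HL.
  set (L := Rpower x (- alpha)) in *.
  apply filterlim_locally_of_bounds; intros eps Heps.
  - (* compare with the scale y for which (y x)^(-alpha) = L^2 / (L + eps) *)
    assert (Hv : 0 < L / (L + eps) < 1).
    { split; [apply Rdiv_lt_0_compat; lra|apply Rlt_div_l; lra]. }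
    set (y := Rpower (L / (L + eps)) (- / alpha)).
    assert (Hy : 0 < y) by apply Rpower_pos.
    pose proof (normalizing_level_cvg (y * x) ltac:(nra)) as Hcvg.
    unfold y in Hcvg at 2. rewrite Rpower_scaled_root in Hcvg by lra. fold L in Hcvg.
    assert (Hlo : L - eps < L / (L + eps) * L).
    { replace (L / (L + eps) * L) with (L * L / (L + eps)) by (field; lra).
      apply Rlt_div_r; nra. }
    assert (Hyv : Rpower y (- alpha) < 1) by (unfold y; rewrite Rpower_root; lra).
    pose proof (filterlim_lt _ _ _ _ (filterlim_const _) Hcvg Hlo) as Hev.
    generalize (filter_and _ _ (normalizing_level_scaled_ge x y Hx Hy Hyv) Hev).
    apply filter_imp. intros s Hs. lra.
  - (* compare with the scale y for which (y x)^(-alpha) = L + eps / 2 *)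
    assert (Hv : 1 < (L + eps / 2) / L) by (apply Rlt_div_r; lra).
    set (y := Rpower ((L + eps / 2) / L) (- / alpha)).
    assert (Hy : 0 < y) by apply Rpower_pos.
    pose proof (normalizing_level_cvg (y * x) ltac:(nra)) as Hcvg.
    unfold y in Hcvg at 2. rewrite Rpower_scaled_root in Hcvg by lra. fold L in Hcvg.
    assert (Hhi : (L + eps / 2) / L * L < L + eps) by (field_simplify; lra).
    assert (Hyv : 1 < Rpower y (- alpha)) by (unfold y; rewrite Rpower_root; lra).
    pose proof (filterlim_lt _ _ _ _ Hcvg (filterlim_const _) Hhi) as Hev.
    generalize (filter_and _ _ (normalizing_level_scaled_le x y Hx Hy Hyv) Hev).
    apply filter_imp. intros s Hs. lra.
Qed.

Lemma normalizing_regularly_varying : regularly_varying u alpha.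
Proof.
  intros x Hx.
  apply is_lim_ext_loc with
    (fun s => (INR (tail_level s) * u (s * x)) / (INR (tail_level s) * u s)).
  - generalize (filterlim_lt _ _ _ _ (filterlim_const 0) tail_level_cvg Rlt_0_1).
    apply filter_imp. intros s Hpos.
    destruct (Rmult_neq_0_reg _ _ (Rgt_not_eq _ _ Hpos)). field. auto.
  - pose proof (is_lim_div _ _ p_infty _ _ (normalizing_level_scaled x Hx) tail_level_cvg)
      as Hdiv.
    simpl in Hdiv. rewrite Rinv_1, Rmult_1_r in Hdiv.
    apply Hdiv; [intros E; injection E; lra|exact I].
Qed.

End Normalizing.

Section RegularVariation.

Hypothesis u_rv : regularly_varying u alpha.

Lemma rv_tail_pos (s : R) : 0 <= s -> 0 < u s.
Proof.
  intros Hs. destruct (Rle_lt_or_eq_dec _ _ (u_ge0 s Hs)) as [|Hs0]; [assumption|exfalso].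
  pose proof (u_rv 1 Rlt_0_1) as Hcvg1. rewrite Rpower_1_base in Hcvg1.
  pose proof (filterlim_lt _ _ _ _ (filterlim_const 0) Hcvg1 Rlt_0_1) as [M HM].
  set (t := Rmax M s + 1).
  assert (Hts : s <= t) by (pose proof (Rmax_r M s); unfold t; lra).
  specialize (HM t ltac:(pose proof (Rmax_l M s); unfold t; lra)). simpl in HM.
  rewrite Rmult_1_r in HM.
  pose proof (u_noninc s t Hs Hts). pose proof (u_ge0 t ltac:(lra)).
  (* u t = 0, and Rocq's 0 / 0 = 0 *)
  replace (u t) with 0 in HM by lra. unfold Rdiv in HM. lra.
Qed.

Lemma rv_cvg_seq (c : nat -> R) (x : R) : 0 < x -> is_lim_seq c p_infty ->
  is_lim_seq (fun n => u (c n * x) / u (c n)) (Rpower x (- alpha)).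
Proof.
  intros Hx Hc.
  exact (filterlim_comp _ _ _ c (fun t => u (t * x) / u t) _ _ _ Hc (u_rv x Hx)).
Qed.

Lemma rv_ratio_shift_ge (b : nat -> R) (h y : R) : 0 <= h -> 1 < y ->
  is_lim_seq b p_infty ->
  eventually (fun n => u (b n) / u (b n / y) <= u (b n) / u (b n - h)).
Proof.
  intros Hh Hy Hb.
  generalize (is_lim_seq_eventually_gt _ (h * y / (y - 1)) Hb).
  apply filter_imp. intros n Hbn.
  assert (Hy0 : 0 <= h * y / (y - 1)).
  { apply Rmult_le_pos; [nra|left; apply Rinv_0_lt_compat; lra]. }
  assert (Hbn0 : 0 < b n) by lra.
  apply Rlt_div_l in Hbn; [|lra].
  assert (Hshift : b n / y <= b n - h) by (apply Rle_div_l; lra).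
  assert (Hby : 0 <= b n / y) by (apply Rmult_le_pos; [lra|left; apply Rinv_0_lt_compat; lra]).
  pose proof (u_noninc _ _ Hby Hshift).
  pose proof (rv_tail_pos (b n - h) ltac:(lra)).
  unfold Rdiv. apply Rmult_le_compat_l; [apply u_ge0; lra|].
  apply Rinv_le_contravar; assumption.
Qed.

Lemma rv_ratio_shift (b : nat -> R) (h : R) : 0 <= h -> is_lim_seq b p_infty ->
  is_lim_seq (fun n => u (b n) / u (b n - h)) 1.
Proof.
  intros Hh Hb. apply filterlim_locally_of_bounds; intros eps Heps.
  - (* compare with the scale y > 1 for which y^(-alpha) = 1 / (1 + eps) *)
    assert (Hv : 0 < / (1 + eps) < 1).
    { split; [apply Rinv_0_lt_compat; lra|rewrite <- Rinv_1; apply Rinv_lt_contravar; lra]. }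
    set (y := Rpower (/ (1 + eps)) (- / alpha)).
    assert (Hy : 1 < y) by (apply Rpower_root_gt1; assumption).
    assert (Hcvg : is_lim_seq (fun n => u (b n) / u (b n / y)) (/ (1 + eps))).
    { rewrite <- (Rpower_root alpha alpha_gt0 (/ (1 + eps))) by lra. fold y.
      apply is_lim_seq_ext with (fun n => u (b n / y * y) / u (b n / y)).
      - intros n. replace (b n / y * y) with (b n) by (field; lra). reflexivity.
      - apply rv_cvg_seq; [lra|]. apply is_lim_seq_div_p_infty; [lra|exact Hb]. }
    assert (Hlo : 1 - eps < / (1 + eps)) by (rewrite <- Rdiv_1_l; apply Rlt_div_r; nra).
    generalize (filter_and _ _ (rv_ratio_shift_ge b h y Hh Hy Hb)
      (filterlim_lt _ _ _ _ (filterlim_const _) Hcvg Hlo)).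
    apply filter_imp. intros n Hn. lra.
  - generalize (is_lim_seq_eventually_gt _ h Hb). apply filter_imp. intros n Hn.
    pose proof (u_noninc (b n - h) (b n) ltac:(lra) ltac:(lra)) as Hle.
    pose proof (rv_tail_pos (b n - h) ltac:(lra)) as Hpos.
    pose proof (proj1 (Rdiv_le_1 _ _ Hpos) Hle). lra.
Qed.

Lemma rv_level_inf (b : nat -> R) : (forall n, 0 <= b n) ->
  (forall n, INR n * u (b n) <= 1) -> is_lim_seq b p_infty.
Proof.
  intros Hb_ge0 Hb_le. apply is_lim_seq_spec. intros M.
  pose proof (rv_tail_pos (Rmax M 0) (Rmax_r M 0)) as Hus.
  generalize (eventually_INR_gt (/ u (Rmax M 0))). apply filter_imp. intros n Hn.
  apply Rmult_lt_compat_r with (r := u (Rmax M 0)) in Hn; [|exact Hus].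
  rewrite Rinv_l in Hn by lra.
  apply Rle_lt_trans with (Rmax M 0); [apply Rmax_l|].
  destruct (Rlt_or_le (Rmax M 0) (b n)) as [|Hbn]; [assumption|exfalso].
  pose proof (u_noninc _ _ (Hb_ge0 n) Hbn).
  pose proof (Rmult_le_compat_l _ _ _ (pos_INR n) H). pose proof (Hb_le n). lra.
Qed.

Lemma rv_level_seq (b : nat -> R) (h : R) : 0 <= h -> is_lim_seq b p_infty ->
  (forall n, INR n * u (b n) <= 1) -> eventually (fun n => 1 < INR n * u (b n - h)) ->
  is_lim_seq (fun n => INR n * u (b n)) 1.
Proof.
  intros Hh Hb Hle Hgt.
  apply is_lim_seq_le_le_loc with (fun n => u (b n) / u (b n - h)) (fun _ => 1);
    [|apply rv_ratio_shift; assumption|apply is_lim_seq_const].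
  generalize (filter_and _ _ Hgt (is_lim_seq_eventually_gt _ h Hb)).
  apply filter_imp. intros n [H1 Hbn]. split; [|apply Hle].
  pose proof (rv_tail_pos (b n - h) ltac:(lra)). pose proof (u_ge0 (b n) ltac:(lra)).
  apply Rle_div_l; [lra|]. nra.
Qed.

Lemma normalizing_of_level (b : nat -> R) : (forall n, 0 < b n) -> is_lim_seq b p_infty ->
  is_lim_seq (fun n => INR n * u (b n)) 1 -> is_normalizing u alpha b.
Proof.
  intros Hpos Hb Hlevel. split; [assumption|]. intros t Ht.
  apply is_lim_seq_ext with (fun n => INR n * u (b n) * (u (b n * t) / u (b n))).
  - intros n. pose proof (rv_tail_pos (b n) (Rlt_le _ _ (Hpos n))). field. lra.
  - replace (Rpower t (- alpha)) with (1 * Rpower t (- alpha)) by ring.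
    apply is_lim_seq_mult'; [assumption|apply rv_cvg_seq; assumption].
Qed.

Lemma tail_index_exists (n : nat) : exists k : nat, INR n * u (INR k) <= 1.
Proof.
  assert (Hcvg : is_lim_seq (fun k => INR n * u (INR k)) (INR n * 0)).
  { apply is_lim_seq_mult'; [apply is_lim_seq_const|].
    exact (filterlim_comp _ _ _ INR u _ _ _ is_lim_seq_INR u_cvg0). }
  rewrite Rmult_0_r in Hcvg.
  destruct (filterlim_lt _ _ _ _ Hcvg (filterlim_const 1) Rlt_0_1) as [N HN].
  exists N. apply Rlt_le, HN, Nat.le_refl.
Qed.

Lemma least_tail_index (n : nat) :
  {k : nat | INR n * u (INR k) <= 1 /\ forall j, INR n * u (INR j) <= 1 -> (k <= j)%nat}.
Proof.
  apply epsilon_smallest; [intros j; apply excluded_middle_informative|].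
  apply tail_index_exists.
Qed.

Lemma rv_normalizing : exists a, is_normalizing u alpha a.
Proof.
  set (k n := proj1_sig (least_tail_index n)).
  assert (Hk : forall n, INR n * u (INR (k n)) <= 1 /\
                 forall j, INR n * u (INR j) <= 1 -> (k n <= j)%nat)
    by (intros n; exact (proj2_sig (least_tail_index n))).
  clearbody k. set (b n := INR (k n) + 1).
  assert (Hb_pos : forall n, 0 < b n) by (intros n; unfold b; pose proof (pos_INR (k n)); lra).
  assert (Hb_le : forall n, INR n * u (b n) <= 1).
  { intros n. destruct (Hk n) as [Hle _]. unfold b. pose proof (pos_INR (k n)).
    pose proof (u_noninc (INR (k n)) (INR (k n) + 1) ltac:(lra) ltac:(lra)).
    pose proof (Rmult_le_compat_l _ _ _ (pos_INR n) H0). lra. }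
  pose proof (rv_level_inf b (fun n => Rlt_le _ _ (Hb_pos n)) Hb_le) as Hb_inf.
  assert (Hb_prev : eventually (fun n => 1 < INR n * u (b n - 2))).
  { generalize (is_lim_seq_eventually_gt _ 2 Hb_inf). apply filter_imp. intros n Hn.
    unfold b in *. destruct (Hk n) as [_ Hmin].
    assert (Hk1 : (1 <= k n)%nat) by (apply INR_le; simpl; lra).
    replace (INR (k n) + 1 - 2) with (INR (k n - 1))
      by (rewrite minus_INR by exact Hk1; simpl; ring).
    destruct (Rlt_or_le 1 (INR n * u (INR (k n - 1)))) as [|Hle]; [assumption|].
    specialize (Hmin _ Hle). lia. }
  exists b. apply normalizing_of_level; try assumption.
  apply (rv_level_seq b 2); (assumption || lra).
Qed.

End RegularVariation.

End Tail.

Lemma Delta_plus_tail (F : R -> R) : in_Delta_plus F ->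
  (forall s, 0 <= s -> 0 <= 1 - F s) /\
  (forall s t, 0 <= s -> s <= t -> 1 - F t <= 1 - F s) /\
  is_lim (fun t => 1 - F t) p_infty 0.
Proof.
  intros [HFb [Hmono [_ Hlim]]]. split; [|split].
  - intros s Hs. pose proof (HFb s Hs). lra.
  - intros s t Hs Hst. pose proof (Hmono s t Hs Hst). lra.
  - replace (Finite 0) with (Finite (1 - 1)) by (f_equal; ring).
    exact (is_lim_minus' _ _ _ _ _ (is_lim_const 1 p_infty) Hlim).
Qed.

Lemma bmpow_cvg_iff (F : R -> R) (b : nat -> R) (L : R) :
  (forall n, 0 <= F (b n) <= 1) -> 0 <= L ->
  is_lim_seq (fun n => bmpow F n (b n)) (/ (1 + L)) <->
  is_lim_seq (fun n => INR n * (1 - F (b n))) L.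
Proof.
  intros HF HL. rewrite <- bmeet_pow_cvg_iff; [|intros n; apply HF|exact HL].
  assert (E : eventually (fun n => bmpow F n (b n) = bmeet_pow (F (b n)) n)).
  { generalize eventually_ge1. apply filter_imp. intros n Hn.
    apply bmpow_closed_form; [apply HF|exact Hn]. }
  split; apply is_lim_seq_ext_loc; [exact E|].
  generalize E. apply filter_imp. intros n. apply eq_sym.
Qed.

Lemma D_alpha_pos (alpha t : R) : 0 < t -> D_alpha alpha t = / (1 + Rpower t (- alpha)).
Proof. intros Ht. unfold D_alpha. destruct (Rlt_dec 0 t); [reflexivity|lra]. Qed.

Lemma bmda_D_alpha_iff (alpha : R) (F : R -> R) : in_Delta_plus F ->
  (in_BMDA F (D_alpha alpha) <-> exists a, is_normalizing (fun t => 1 - F t) alpha a).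
Proof.
  intros HF. pose proof (Delta_plus_tail F HF) as [Hu_ge0 [Hu_noninc _]].
  destruct HF as [HFb _].
  assert (Hscaled : forall a t, (forall n, 0 < a n) -> 0 < t ->
    is_lim_seq (fun n => bmpow F n (a n * t)) (D_alpha alpha t) <->
    is_lim_seq (fun n => INR n * (1 - F (a n * t))) (Rpower t (- alpha))).
  { intros a t Ha Ht. rewrite D_alpha_pos by exact Ht.
    apply bmpow_cvg_iff; [|left; apply Rpower_pos].
    intros n. apply HFb. pose proof (Ha n). nra. }
  split.
  - intros [a [Ha Hcvg]]. exists a. split; [exact Ha|].
    intros t Ht. apply Hscaled; [exact Ha|exact Ht|]. apply Hcvg. lra.
  - intros [a Ha]. exists a. split; [apply Ha|]. intros t [Ht|<-].
    + apply Hscaled; [apply Ha|exact Ht|]. apply Ha, Ht.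
    + pose proof (normalizing_tail_pos _ Hu_ge0 Hu_noninc alpha a Ha 0 (Rle_refl 0)).
      unfold D_alpha. destruct (Rlt_dec 0 0) as [Habs|_]; [lra|].
      apply is_lim_seq_ext_loc with (bmeet_pow (F 0)); [|apply bmeet_pow_cvg0; lra].
      generalize eventually_ge1. apply filter_imp. intros n Hn.
      rewrite Rmult_0_r. symmetry. apply bmpow_closed_form; [apply HFb; lra|exact Hn].
Qed.

Theorem corollary4p3 (alpha : R) (F : R -> R) :
  0 < alpha -> in_Delta_plus F ->
  (in_BMDA F (D_alpha alpha) <-> regularly_varying (fun t => 1 - F t) alpha).
Proof.
  intros Halpha HF.
  pose proof (Delta_plus_tail F HF) as [Hu_ge0 [Hu_noninc Hu_cvg0]].
  rewrite (bmda_D_alpha_iff alpha F HF). split.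
  - intros [a Ha].
    exact (normalizing_regularly_varying _ Hu_ge0 Hu_noninc Hu_cvg0 _ Halpha a Ha).
  - intros Hrv. exact (rv_normalizing _ Hu_ge0 Hu_noninc Hu_cvg0 _ Halpha Hrv).
Qed.
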